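(* Let $T$ be the regular rooted tree of valence $p\geq 2$ with the embedded wire diffeology $\mathcal{D}_T$, and equip $\operatorname{Aut}T$ with the functional diffeology. Let $P:\mathbb{R}\to\operatorname{Aut}T$ be a plot of this diffeology. Then each of the two sequences $(P(n))_{n\in\mathbb{N}}$ and $(P(-m))_{m\in\mathbb{N}}$ converges in the congruence topology on $\operatorname{Aut}T$.
   Context: Fix a finite alphabet $A$ with $|A|=p\geq 2$. The vertices of $T$ are the finite words over $A$ (the root is the empty word); the length $|u|$ of a word is its level; two vertices are joined by an edge iff they have the form $a_1\dots a_n$ and $a_1\dots a_na_{n+1}$. As a topological space, $T$ is the 1-dimensional CW complex obtained by realizing each edge as a copy of $[0,1]$, with its usual topology. $\operatorname{Aut}T$ is the group of bijections of the vertex set fixing the root and preserving adjacency; each is regarded as a homeomorphism of the geometric realization mapping each edge affinely onto its image edge. $\operatorname{Stab}(n)$ is the subgroup of automorphisms fixing every vertex of level $n$. The congruence topology on $\operatorname{Aut}T$ is the group topology in which the subgroups $\operatorname{Stab}(n)$, $n\in\mathbb{N}$, form a basis of neighbourhoods of the identity. A diffeology on a set $X$ is a collection of maps $U\to X$ (''plots''), $U$ ranging over open subsets of all $\mathbb{R}^n$, containing all constant maps, closed under precomposition with smooth maps, and satisfying the sheaf condition. The embedded wire diffeology $\mathcal{D}_T$ is the diffeology on $T$ generated by (i.e. the smallest diffeology containing) all maps $\gamma:\mathbb{R}\to T$ that are injective, continuous, and homeomorphisms onto their images. A map between diffeological spaces is smooth if it sends plots to plots. The functional diffeology on $C^\infty(T,T)$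 is the coarsest diffeology such that the evaluation map $C^\infty(T,T)\times T\to T$ is smooth (with the product diffeology, the coarsest making projections smooth); $\operatorname{Aut}T\subseteq C^\infty(T,T)$ carries the subset diffeology. Equivalently, $P:U\to\operatorname{Aut}T$ is a plot iff $(u,x)\mapsto P(u)(x)$ is smooth $U\times T\to T$. *)

From mathcomp Require Import all_boot all_order all_algebra.
From mathcomp Require Import all_classical all_reals all_analysis.
Import numFieldNormedType.Exports.
Import Order.TTheory GRing.Theory Num.Theory.

Set Implicit Arguments.
Unset Strict Implicit.
Unset Printing Implicit Defensive.

Local Open Scope classical_set_scope.
Local Open Scope ring_scope.

Definition iterD (R : realType) (V W : normedModType R)
  (vs : seq V) (f : V -> W) : V -> W :=
  foldr (fun v g => fun x => derive g x v) f vs.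

Definition smooth_on (R : realType) (V W : normedModType R)
  (U : set V) (f : V -> W) : Prop :=
  forall (vs : seq V) (x : V), U x ->
    {for x, continuous (iterD vs f)} /\
    (forall v : V, derivable (iterD vs f) x v).

(* Diffeologies.  A parametrization of X is given by n, an (open)      *)
(* domain U of R^n = 'rV[R]_n, and a map 'rV[R]_n -> X whose values    *)
(* only matter on U.                                                   *)

Definition param_family (R : realType) (X : Type) :=
  forall n : nat, set 'rV[R]_n -> ('rV[R]_n -> X) -> Prop.

Definition is_diffeology (R : realType) (X : Type) (D : param_family R X)
  : Prop :=
  (* plots are maps on their domain: only the values on U matter *)
  (forall n (U : set 'rV[R]_n) (P Q : 'rV[R]_n -> X),
      open U -> D n U P -> (forall z, U z -> P z = Q z) -> D n U Q) /\
  (forall n (U : set 'rV[R]_n) (x : X), open U -> D n U (fun _ => x)) /\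
  (forall n m (U : set 'rV[R]_n) (V : set 'rV[R]_m)
          (P : 'rV[R]_n -> X) (F : 'rV[R]_m -> 'rV[R]_n),
      open U -> open V -> smooth_on V F -> (forall z, V z -> U (F z)) ->
      D n U P -> D m V (P \o F)) /\
  (forall n (U : set 'rV[R]_n) (P : 'rV[R]_n -> X),
      open U ->
      (forall z, U z -> exists W : set 'rV[R]_n,
          [/\ open W, W z, W `<=` U & D n W P]) ->
      D n U P).

(* The diffeology generated by a family of curves R -> X: the smallest
   diffeology containing them (a curve is a plot with domain R^1). *)
Definition generated_plot (R : realType) (X : Type) (G : (R -> X) -> Prop)
  : param_family R X :=
  fun n U P => open U /\
    forall D : param_family R X, is_diffeology D ->
      (forall g, G g -> D 1%N setT (fun z : 'rV[R]_1 => g (z ord0 ord0))) ->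
      D n U P.

(* The regular rooted tree T of valence p: vertices = words over 'I_p. *)

Definition vertex (p : nat) := seq 'I_p.

Definition adjacent (p : nat) (u v : vertex p) : Prop :=
  (exists a : 'I_p, v = rcons u a) \/ (exists a : 'I_p, u = rcons v a).

Definition is_aut (p : nat) (g : vertex p -> vertex p) : Prop :=
  bijective g /\ g [::] = [::] /\
  (forall u v, adjacent u v -> adjacent (g u) (g v)).

Definition Stab (p : nat) (n : nat) (h : vertex p -> vertex p) : Prop :=
  is_aut h /\ (forall u : vertex p, size u = n -> h u = u).

(* convergence of a sequence of automorphisms in the congruence
   topology: the cosets g Stab(n) form a basis of neighbourhoods of g *)
Definition cong_converges (p : nat) (s : nat -> vertex p -> vertex p)
  : Prop :=
  exists g, is_aut g /\
    forall n : nat, exists N : nat, forall k : nat, (N <= k)%N ->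
      exists h, Stab n h /\ s k = g \o h.

(* Geometric realization of T.  A point is either the root, or        *)
(* EPt u a t with 0 < t <= 1: the point at distance t from the vertex *)
(* u on the edge from u to u a (t = 1 is the vertex u a itself).       *)

Record epoint (R : realType) (p : nat) := EPt {
  ep_u : vertex p;
  ep_a : 'I_p;
  ep_t : R;
  ep_tP : (0 < ep_t <= 1)%R }.

Definition tpoint (R : realType) (p : nat) := option (epoint R p).

Lemma one_in01 (R : realType) : (0 < (1 : R) <= 1)%R.
Proof. by rewrite ltr01 lexx. Qed.

Definition vtx (R : realType) (p : nat) (v : vertex p) : tpoint R p :=
  if v is b :: w then Some (EPt (belast b w) (last b w) (one_in01 R))
  else None.

Definition edge_map (R : realType) (p : nat) (u : vertex p) (a : 'I_p)
  (t : R) : tpoint R p :=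
  match boolP (0 < t <= 1)%R with
  | AltTrue h => Some (EPt u a h)
  | AltFalse _ => if (t <= 0)%R then vtx R u else vtx R (rcons u a)
  end.

(* CW topology: O is open iff its preimage under every edge map is open
   in [0,1] *)
Definition T_open (R : realType) (p : nat) (O : set (tpoint R p)) : Prop :=
  forall (u : vertex p) (a : 'I_p) (t : R), (0 <= t <= 1)%R ->
    O (edge_map u a t) ->
    exists2 e : R, (0 < e)%R &
      forall s : R, (0 <= s <= 1)%R -> (`|s - t| < e)%R -> O (edge_map u a s).

Definition T_continuous (R : realType) (p : nat) (g : R -> tpoint R p)
  : Prop :=
  forall O, T_open O -> open (g @^-1` O).

Definition embedded_wire (R : realType) (p : nat) (g : R -> tpoint R p)
  : Prop :=
  injective g /\ T_continuous g /\
  (forall V : set R, open V ->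
     exists O, T_open O /\ g @` V = O `&` range g).

Definition plotT (R : realType) (p : nat) : param_family R (tpoint R p) :=
  generated_plot (@embedded_wire R p).

(* action of a vertex automorphism on the geometric realization: the
   edge (u, u a) is mapped affinely onto (g u, g (u a)) = (g u, (g u) b) *)
Definition act (R : realType) (p : nat) (g : vertex p -> vertex p)
  (x : tpoint R p) : tpoint R p :=
  match x with
  | None => None
  | Some (EPt u a t h) => Some (EPt (g u) (last a (g (rcons u a))) h)
  end.

(* P : R -> Aut T is a plot of the functional diffeology iff
   (r, x) |-> P r x is smooth R x T -> T (product diffeology). *)
Definition aut_plot1 (R : realType) (p : nat)
  (P : R -> vertex p -> vertex p) : Prop :=
  (forall r, is_aut (P r)) /\
  forall n (W : set 'rV[R]_n) (r : 'rV[R]_n -> R) (q : 'rV[R]_n -> tpoint R p),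
    open W -> smooth_on W r -> plotT W q ->
    plotT W (fun z => act (P (r z)) (q z)).

(* Plots of the wire diffeology are continuous for the CW topology, since
   continuous parametrizations already form a diffeology containing the
   embedded wires.  Feeding the plot hypothesis the constant plot at a vertex
   [u a] and the identity parameter, the curve [r |-> P r (u a)] in T is
   continuous; the open star of a vertex contains no other vertex, so
   [r |-> P r u] is locally constant, hence constant because R is connected.
   Thus every plot of Aut T is constant, and constant sequences converge. *)

From Pilot Require Import Defs.
From mathcomp Require Import all_boot all_order all_algebra.
From mathcomp Require Import all_classical all_reals all_analysis.
From mathcomp Require Import lra.
Import numFieldNormedType.Exports.
Import Order.TTheory GRing.Theory Num.Theory.

Set Implicit Arguments.
Unset Strict Implicit.
Unset Printing Implicit Defensive.

Local Open Scope ring_scope.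
Local Open Scope classical_set_scope.

Section Coordinate.
Variable R : realType.

Definition coord0 (z : 'rV[R]_1) : R := z ord0 ord0.

Lemma derive_coord0 (x v : 'rV[R]_1) : derive coord0 x v = v ord0 ord0.
Proof.
rewrite /derive; apply: cvg_lim => //.
apply: cvg_trans (cvg_cst (v ord0 ord0)).
apply: near_eq_cvg; near=> h.
have h0 : h != 0 by near: h; exact: nbhs_dnbhs_neq.
by rewrite /= /coord0 !mxE /= addrK /GRing.scale /= mulrA mulVf // mul1r.
Unshelve. all: try by end_near. all: exact: (@dnbhs_filter R 0).
Qed.

Lemma iterD_coord0 (vs : seq 'rV[R]_1) :
  Defs.iterD vs coord0 = match vs with
                          | [::] => coord0
                          | [:: v] => cst (v ord0 ord0)
                          | _ => cst 0 end.
Proof.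
elim: vs => [//|v vs IH] /=; apply/funext => x; rewrite IH.
case: vs IH => [|w [|u us]] _ /=; first exact: derive_coord0.
all: by rewrite derive_cst.
Qed.

Lemma smooth_coord0 : smooth_on setT coord0.
Proof.
move=> vs x _; rewrite iterD_coord0.
case: vs => [|v [|w ws]]; split; do ?[exact: cst_continuous].
- exact: coord_continuous.
- by move=> ?; exact/diff_derivable/differentiable_coord.
- by move=> ?; exact: derivable_cst.
- by move=> ?; exact: derivable_cst.
Qed.

End Coordinate.

Arguments coord0 {R}.

Section ContinuousPlots.
Variables (R : realType) (p : nat).

Definition continuous_param : param_family R (tpoint R p) :=
  fun n U q => forall z, U z -> forall O, T_open O -> O (q z) ->
    \forall w \near z, O (q w).

Lemma continuous_param_diffeology : is_diffeology continuous_param.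
Proof.
split; [|split; [|split]].
- move=> n U q q' oU cq qq' z Uz O oO Oq'z.
  have Oq : \forall w \near z, O (q w) by apply: cq; rewrite ?qq'.
  have HU : \forall w \near z, U w by exact: open_nbhs_nbhs.
  by near=> w; rewrite -qq'; [near: w | near: w].
- by move=> n U x oU z Uz O oO Ox; apply: filterE.
- move=> n m U V q F oU oV sF FUV cq z Vz O oO Oqz.
  have [Fc _] := sF [::] z Vz.
  exact: Fc _ (cq (F z) (FUV z Vz) O oO Oqz).
- move=> n U q oU loc z Uz.
  by have [W [_ Wz _ cW]] := loc z Uz; exact: cW.
Unshelve. all: by end_near.
Qed.

Lemma embedded_wire_continuous_param (g : R -> tpoint R p) :
  embedded_wire g -> continuous_param setT (fun z => g (coord0 z)).
Proof.
move=> [_ [gc _]] z _ O oO Ogz.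
have gO : nbhs (coord0 z) (g @^-1` O).
  by apply: open_nbhs_nbhs; split => //; exact: gc.
exact: (@coord_continuous R 1 1 ord0 ord0 z) _ gO.
Qed.

Lemma plotT_continuous n (U : set 'rV[R]_n) q :
  plotT U q -> continuous_param U q.
Proof.
move=> [_ gen]; apply: gen; first exact: continuous_param_diffeology.
exact: embedded_wire_continuous_param.
Qed.

Lemma plotT_cst n (U : set 'rV[R]_n) (x : tpoint R p) :
  open U -> plotT U (fun _ => x).
Proof. by move=> oU; split => // D [_ [Dcst _]] _; exact: Dcst. Qed.

End ContinuousPlots.

Section VertexStar.
Variables (R : realType) (p : nat).

Lemma edge_map_inner (u : vertex p) a (t : R) (h : 0 < t <= 1) :
  edge_map u a t = Some (EPt u a h).
Proof.
rewrite /edge_map; destruct (boolP (0 < t <= 1)) as [h'|h'].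
  by rewrite (bool_irrelevance h' h).
by rewrite h in h'.
Qed.

Lemma edge_map0 (u : vertex p) a : edge_map u a (0 : R) = vtx R u.
Proof.
rewrite /edge_map; destruct (boolP (0 < (0 : R) <= 1)) as [h|_].
  by exfalso; move: h; rewrite ltxx.
by rewrite lexx.
Qed.

Lemma vtx_rcons (u : vertex p) a :
  vtx R (rcons u a) = Some (EPt u a (one_in01 R)).
Proof. by case: u => [|c cs] //=; rewrite belast_rcons last_rcons. Qed.

Variables (u0 : vertex p) (a0 : 'I_p).

(* The open star of the vertex [u0 a0]: the outer half of the edge
   [(u0, u0 a0)] and the inner halves of the edges leaving [u0 a0]. *)
Definition vertex_star : set (tpoint R p) := fun x =>
  if x is Some e then
    (ep_u e = u0 /\ ep_a e = a0 /\ 2^-1 < ep_t e) \/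
    (ep_u e = rcons u0 a0 /\ ep_t e < 2^-1)
  else False.

Lemma vertex_star_vtx (u : vertex p) :
  vertex_star (vtx R u) <-> u = rcons u0 a0.
Proof.
split; last by move->; rewrite vtx_rcons /=; left; do 2 split => //; lra.
case: u => [//|b w] /= [[<- [<- _]]|[_ h]]; first by rewrite -lastI.
by exfalso; lra.
Qed.

Lemma vertex_star_edge_map (u : vertex p) a (t : R) : 0 <= t <= 1 ->
  vertex_star (edge_map u a t) <->
  (u = u0 /\ a = a0 /\ 2^-1 < t) \/ (u = rcons u0 a0 /\ t < 2^-1).
Proof.
move=> /andP[t0 t1]; have [<-|tp] := eqVneq 0 t; last first.
  have ht : 0 < t <= 1 by rewrite lt_neqAle tp t0 t1.
  by rewrite (edge_map_inner u a ht).
rewrite edge_map0 vertex_star_vtx; split.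
  by move->; right; split => //; lra.
by case=> [[_ [_ h]]|[]//]; exfalso; lra.
Qed.

Lemma vertex_star_open : T_open vertex_star.
Proof.
move=> u a t ht /(vertex_star_edge_map _ _ ht) [[eu [ea tl]]|[eu tl]].
- exists (t - 2^-1); first by rewrite subr_gt0.
  move=> s hs; rewrite ltr_norml => /andP[h1 h2].
  by apply/(vertex_star_edge_map _ _ hs); left; do 2 split => //; lra.
- exists (2^-1 - t); first by rewrite subr_gt0.
  move=> s hs; rewrite ltr_norml => /andP[h1 h2].
  by apply/(vertex_star_edge_map _ _ hs); right; split => //; lra.
Qed.

End VertexStar.

Lemma locally_constant_connectedT (T : topologicalType) (Y : Type)
    (f : T -> Y) :
  connected [set: T] -> (forall x0, \forall x \near x0, f x = f x0) ->
  forall x y, f x = f y.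
Proof.
move=> cT floc x y; pose B := [set z | f z = f x].
have oB : open B.
  rewrite openE => z Bz; have := floc z.
  by apply: filterS => w /= fwz; rewrite /B /= fwz.
have oCB : open (~` B).
  rewrite openE => z Bz; have := floc z.
  by apply: filterS => w /= fwz; rewrite /B /= fwz.
have BT : B = [set: T].
  apply: cT; first by exists x.
    by exists B; rewrite ?setTI.
  by exists B; [rewrite -[B]setCK closedC | rewrite setTI].
have : B y by rewrite BT.
by move->.
Qed.

Lemma connectedT_real (R : realType) : connected [set: R].
Proof. by apply/connected_intervalP => x y _ _ z _. Qed.

Section ConstantPlots.
Variables (R : realType) (p : nat) (P : R -> vertex p -> vertex p).
Hypothesis plotP : aut_plot1 P.

Lemma aut_plot1_locally_constant (a : 'I_p) (u : vertex p) (r0 : R) :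
  \forall r \near r0, P r u = P r0 u.
Proof.
have [_ smP] := plotP.
pose v : tpoint R p := vtx R (rcons u a).
have /plotT_continuous contP :=
  smP 1%N setT coord0 (fun=> v) openT (@smooth_coord0 R) (plotT_cst v openT).
pose e1 : 'rV[R]_1 := const_mx 1.
have coord0_e1 r : coord0 (r *: e1) = r by rewrite /coord0 !mxE mulr1.
pose b := last a (P r0 (rcons u a)).
have := contP (r0 *: e1) I _ (@vertex_star_open R p (P r0 u) b).
rewrite /= coord0_e1 /v vtx_rcons /=.
move=> /(_ (or_introl (conj erefl (conj erefl _)))).
move=> /(_ ltac:(lra)) near_star.
have := @scalel_continuous R _ e1 r0 _ near_star.
rewrite nbhs_simpl /=; apply: filterS => r /=.
by rewrite coord0_e1 => -[[<- _]|[_ h]] //; exfalso; lra.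
Qed.

Lemma aut_plot1_constant : (0 < p)%N -> forall r, P r = P 0.
Proof.
move=> p_gt0 r; apply/funext => u.
exact: (locally_constant_connectedT (@connectedT_real R)
  (aut_plot1_locally_constant (Ordinal p_gt0) u)).
Qed.

End ConstantPlots.

Lemma cong_converges_cst (p : nat) (g : vertex p -> vertex p) :
  is_aut g -> cong_converges (fun _ : nat => g).
Proof.
move=> autg; exists g; split => // n; exists 0%N => k _.
by exists id; split; [do 2 split => //; exists id|].
Qed.

Theorem mainTheorem4 (R : realType) (p : nat) (hp : (2 <= p)%N)
  (P : R -> vertex p -> vertex p) :
  aut_plot1 P ->
  cong_converges (fun n : nat => P n%:R) /\
  cong_converges (fun m : nat => P (- m%:R)).
Proof.
move=> plotP; have p_gt0 : (0 < p)%N by apply: leq_trans hp.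
have constP := aut_plot1_constant plotP p_gt0.
have autP0 : is_aut (P 0) by case: plotP.
split.
- by rewrite (funext (fun n : nat => constP n%:R)); exact: cong_converges_cst.
- rewrite (funext (fun m : nat => constP (- m%:R))).
  exact: cong_converges_cst.
Qed.
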